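(* Let $q$, $\phi,\theta$, $U_1$ and $a^*,b^*$ be as in the context, and for $\lambda\in(0,\infty)$ let $\xi(\lambda)=-\frac{b^*}{2a^*}+\frac{i}{a^*}$ and $\psi(x,\lambda)=\theta(x,\lambda)-\xi(\lambda)\phi(x,\lambda)$. Then for every $x_0>0$ and every $\lambda\in(0,\infty)$, \[\lim_{N\to\infty}\frac{\int_{x_0}^N\psi(x,\lambda)^2\,dx}{\int_{x_0}^N|\psi(x,\lambda)|^2\,dx}=0.\]
   Context: $-y''+qy=\lambda y$ on $(0,\infty)$, $q(x)=\frac{q_0}{x^2}+\frac{q_1}{x}+\sum_{n\ge0}q_{n+2}x^n$ with real coefficients, series convergent on $(0,\infty)$, $q_0\ge-\tfrac14$, $q_0,q_1$ not both zero, $q\to0$ at $\infty$, and for some $x_0>0$ either $q\in L_1(x_0,\infty)$ or ($q'\in L_1(x_0,\infty)$, $q\in AC_{loc}[x_0,\infty)$). $\phi,\theta$: with $q_0=\nu^2-\frac14$, $\nu\ge0$, $\phi=x^{1/2+\nu}(1+\sum_{n\ge1}a_n(\lambda)x^n)$ is the Frobenius solution at $0$ for the larger indicial root, $y_2$ a second (possibly logarithmic) Frobenius solution with leading coefficient $1$ and coefficients real polynomials in $\lambda$, $C=W(\phi,y_2)\ne0$ real, $\theta=y_2/C$, so $W(\phi,\theta)=1$. Appell system: $(P,Q,R)'=M(P,Q,R)^T$, $M=\begin{pmatrix}0&\lambda-q&0\\-2&0&2(\lambda-q)\\0&-1&0\end{pmatrix}$; $U_1$ is its unique solution with $\lim_{x\to\infty}U_1=(\sqrt\lambda,0,1/\sqrt\lambda)^T$,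 and $a^*,b^*,c^*$ are the real coefficients with $U_1=a^*((\theta')^2,-2\theta\theta',\theta^2)^T+b^*(\theta'\phi',-(\theta\phi'+\theta'\phi),\theta\phi)^T+c^*((\phi')^2,-2\phi\phi',\phi^2)^T$ (one has $a^*>0$). *)

From Stdlib Require Import Reals.
From Coquelicot Require Import Coquelicot.
Open Scope R_scope.

(* The potential q(x) = q0/x^2 + q1/x + sum_{n>=0} c n x^n,
   where c n plays the role of q_{n+2}. *)
Definition qpot (q0 q1 : R) (c : nat -> R) (x : R) : R :=
  q0 / x ^ 2 + q1 / x + PSeries c x.

Definition is_sol (q : R -> R) (lam : R) (y : R -> R) : Prop :=
  forall x, 0 < x ->
    ex_derive y x /\ ex_derive (Derive y) x /\
    - Derive (Derive y) x + q x * y x = lam * y x.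

Definition wronskian (f g : R -> R) (x : R) : R :=
  f x * Derive g x - Derive f x * g x.

(* f is (Lebesgue) integrable on (a, oo); f is continuous there in our use,
   so this is improper Riemann integrability of |f|. *)
Definition L1_tail (f : R -> R) (a : R) : Prop :=
  ex_RInt_gen (fun x => Rabs (f x)) (at_point a) (Rbar_locally p_infty).

From Stdlib Require Import Reals Lra.
From Coquelicot Require Import Coquelicot.
Open Scope R_scope.

(* Write psi = u + i v with u = theta + bstar / (2 astar) phi and v = - phi / astar; both u and
   v solve the equation.  The normalisation W(phi, theta) = 1 and the limit of U_1 at infinity
   force 4 astar cstar - bstar^2 = 4, and then U_1 = (P, Q, S) = astar (|psi'|^2,
   -2 Re(psi conj(psi')), |psi|^2).  Hence |psi|^2 = S / astar tends to 1 / (astar sqrt lam) > 0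
   and the denominator grows linearly.  For the numerator, (psi psi')' = psi'^2 + (q - lam) psi^2
   and the algebraic relation P psi^2 + S psi'^2 + Q psi psi' = 0 give
     (S psi psi')' + 2 sqrt lam psi^2
       = -2 Q psi psi' - (P - sqrt lam + lam (S - 1 / sqrt lam) - S q) psi^2,
   which tends to 0 because psi and psi psi' stay bounded; as S psi psi' is bounded too,
   integrating shows that the integral of psi^2 over [x0, N] is o(N). *)

Lemma ex_RInt_continuous_pos (f : R -> R) (a b : R) :
  0 < a -> 0 < b -> (forall x, 0 < x -> continuous f x) -> ex_RInt f a b.
Proof.
  intros Ha Hb Hf. apply (@ex_RInt_continuous R_CompleteNormedModule).
  intros x [Hx _]. apply Hf. eapply Rlt_le_trans; [|exact Hx].
  now apply Rmin_glb_lt.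
Qed.

Lemma is_lim_mult_finite (f g : R -> R) (x : Rbar) (lf lg : R) :
  is_lim f x lf -> is_lim g x lg -> is_lim (fun y => f y * g y) x (lf * lg).
Proof. intros Hf Hg. now apply (is_lim_mult f g x lf lg). Qed.

Lemma is_lim_eventually_const (f : R -> R) (k l : R) :
  (forall x, 0 < x -> f x = k) -> is_lim f p_infty l -> k = l.
Proof.
  intros Hf Hl.
  assert (Hk : is_lim f p_infty k).
  { apply (is_lim_ext_loc (fun _ => k)); [exists 0; intros; symmetry; auto|].
    apply is_lim_const. }
  apply is_lim_unique in Hl. apply is_lim_unique in Hk.
  rewrite Hl in Hk. now injection Hk.
Qed.

Lemma is_lim_0_of_abs_le (f h : R -> R) :
  (forall x, 0 < x -> Rabs (f x) <= h x) -> is_lim h p_infty 0 ->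
  is_lim f p_infty 0.
Proof.
  intros Hfh Hh. apply (is_lim_le_le_loc (fun x => - h x) h).
  - exists 0. intros x Hx. apply Rabs_le_between, Hfh, Hx.
  - replace (Finite 0) with (Rbar_opp 0) by (simpl; f_equal; ring).
    now apply is_lim_opp.
  - exact Hh.
Qed.

Lemma bounded_of_abs_le_lim (f h : R -> R) (L : R) :
  (forall x, 0 < x -> Rabs (f x) <= h x) -> is_lim h p_infty L ->
  exists B, Rbar_locally p_infty (fun x => Rabs (f x) <= B).
Proof.
  intros Hfh Hh. exists (L + 1).
  apply is_lim_spec in Hh. destruct (Hh (mkposreal 1 Rlt_0_1)) as [M HM].
  exists (Rmax M 0). intros x Hx.
  specialize (HM x (Rle_lt_trans _ _ _ (Rmax_l M 0) Hx)). simpl in HM.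
  specialize (Hfh x (Rle_lt_trans _ _ _ (Rmax_r M 0) Hx)).
  apply Rabs_lt_between in HM. lra.
Qed.

Lemma is_lim_Rabs_finite (f : R -> R) (x : Rbar) (l : R) :
  is_lim f x l -> is_lim (fun y => Rabs (f y)) x (Rabs l).
Proof. apply is_lim_Rabs. Qed.

Definition sublinear (I : R -> R) : Prop :=
  forall eps, 0 < eps ->
    exists K, Rbar_locally p_infty (fun N => Rabs (I N) <= K + eps * N).

Definition linear_growth (D : R -> R) : Prop :=
  exists m K, 0 < m /\ Rbar_locally p_infty (fun N => m * N - K <= D N).

Lemma is_lim_div_sublinear_linear_growth (I D : R -> R) :
  sublinear I -> linear_growth D -> is_lim (fun N => I N / D N) p_infty 0.
Proof.
  intros HI [m [K [Hm HD]]]. apply is_lim_spec. intros eps.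
  assert (He : 0 < eps * m / 2) by (pose proof (cond_pos eps); apply Rdiv_lt_0_compat; nra).
  destruct (HI _ He) as [K' HK'].
  set (M := (2 * (Rabs K' + eps * Rabs K) + 2 * Rabs K) / (eps * m)).
  assert (Hlarge : Rbar_locally p_infty (fun N => M < N)) by (exists M; auto).
  generalize (filter_and _ _ Hlarge (filter_and _ _ HK' HD)).
  apply filter_imp. intros N (HN & HIN & HDN).
  pose proof (cond_pos eps). pose proof (Rle_abs K). pose proof (Rle_abs K').
  pose proof (Rabs_pos K). pose proof (Rabs_pos K').
  assert (HMN : 2 * (Rabs K' + eps * Rabs K) + 2 * Rabs K < eps * m * N).
  { assert (eps * m * M = 2 * (Rabs K' + eps * Rabs K) + 2 * Rabs K)
      by (unfold M; field; nra).
    apply (Rmult_lt_compat_l (eps * m)) in HN; nra. }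
  assert (HDpos : 0 < D N) by nra.
  rewrite Rminus_0_r. unfold Rdiv. rewrite Rabs_mult, Rabs_inv, (Rabs_right (D N)) by lra.
  apply (Rmult_lt_reg_r (D N)); [exact HDpos|].
  rewrite Rmult_assoc, Rinv_l, Rmult_1_r by lra. nra.
Qed.

Lemma RInt_sublinear (F W dW : R -> R) (k x0 : R) :
  0 < k -> 0 < x0 ->
  (forall x, 0 < x -> continuous F x) ->
  (forall x, 0 < x -> is_derive W x (dW x)) ->
  (forall x, 0 < x -> continuous dW x) ->
  (exists B, Rbar_locally p_infty (fun x => Rabs (W x) <= B)) ->
  is_lim (fun x => k * F x + dW x) p_infty 0 ->
  sublinear (fun N => RInt F x0 N).
Proof.
  intros Hk Hx0 HF HW HdW [B [XB HB]] Hdefect eps Heps.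
  apply is_lim_spec in Hdefect.
  destruct (Hdefect (mkposreal (k * eps) ltac:(nra))) as [Xd Hsmall]. simpl in Hsmall.
  set (X := Rmax x0 (Rmax XB Xd) + 1).
  assert (HX0 : x0 < X) by (unfold X; pose proof (Rmax_l x0 (Rmax XB Xd)); lra).
  assert (HXB : XB < X)
    by (unfold X; pose proof (Rmax_r x0 (Rmax XB Xd)); pose proof (Rmax_l XB Xd); lra).
  assert (HXd : Xd < X)
    by (unfold X; pose proof (Rmax_r x0 (Rmax XB Xd)); pose proof (Rmax_r XB Xd); lra).
  exists (Rabs (RInt F x0 X) + 2 * B / k), X. intros N HN.
  assert (HFint : forall a b, 0 < a -> 0 < b -> ex_RInt F a b)
    by (intros; now apply ex_RInt_continuous_pos).
  assert (Hpos : forall t, Rmin X N <= t <= Rmax X N -> 0 < t).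
  { intros t [Ht _]. eapply Rlt_le_trans; [|exact Ht]. apply Rmin_glb_lt; lra. }
  assert (Hcomb : is_RInt (fun t => k * F t + dW t) X N (k * RInt F X N + (W N - W X))).
  { apply (is_RInt_plus (fun t => k * F t) dW).
    - apply (is_RInt_scal F), (@RInt_correct R_CompleteNormedModule), HFint; lra.
    - apply (is_RInt_derive W dW); intros t Ht; [apply HW | apply HdW]; now apply Hpos. }
  assert (Hdef : Rabs (k * RInt F X N + (W N - W X)) <= (N - X) * (k * eps)).
  { rewrite <- (is_RInt_unique _ _ _ _ Hcomb).
    apply abs_RInt_le_const; [lra | eexists; exact Hcomb |].
    intros t Ht. left. rewrite <- (Rminus_0_r (_ + _)). apply Hsmall. lra. }
  assert (HWN : Rabs (W N) <= B) by (apply HB; lra).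
  assert (HWX : Rabs (W X) <= B) by (apply HB; lra).
  assert (Htail : Rabs (RInt F X N) <= (N - X) * eps + 2 * B / k).
  { apply (Rmult_le_reg_l k); [lra|].
    replace (k * ((N - X) * eps + 2 * B / k)) with ((N - X) * (k * eps) + 2 * B)
      by (field; lra).
    rewrite <- (Rabs_right k) at 1 by lra. rewrite <- Rabs_mult.
    set (T := k * RInt F X N + (W N - W X)) in Hdef.
    replace (k * RInt F X N) with (T + - W N + W X) by (unfold T; ring).
    pose proof (Rabs_triang (T + - W N) (W X)) as Htri1.
    pose proof (Rabs_triang T (- W N)) as Htri2. rewrite Rabs_Ropp in Htri2. lra. }
  rewrite <- (RInt_Chasles F x0 X N) by (apply HFint; lra).
  eapply Rle_trans; [apply Rabs_triang|]. nra.
Qed.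

Lemma RInt_linear_growth (g : R -> R) (l x0 : R) :
  0 < l -> 0 < x0 ->
  (forall x, 0 < x -> continuous g x) -> (forall x, 0 < x -> 0 <= g x) ->
  is_lim g p_infty l -> linear_growth (fun N => RInt g x0 N).
Proof.
  intros Hl Hx0 Hg Hg0 Hlim. apply is_lim_spec in Hlim.
  destruct (Hlim (mkposreal (l / 2) ltac:(lra))) as [M HM]. simpl in HM.
  set (X := Rmax x0 M + 1).
  assert (HX0 : x0 < X) by (unfold X; pose proof (Rmax_l x0 M); lra).
  assert (HXM : M < X) by (unfold X; pose proof (Rmax_r x0 M); lra).
  exists (l / 2), (l / 2 * X). split; [lra|]. exists X. intros N HN.
  assert (Hint : forall a b, 0 < a -> 0 < b -> ex_RInt g a b)
    by (intros; now apply ex_RInt_continuous_pos).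
  rewrite <- (RInt_Chasles g x0 X N) by (apply Hint; lra).
  assert (Hhead : 0 <= RInt g x0 X).
  { apply RInt_ge_0; [lra | apply Hint; lra |]. intros t Ht. apply Hg0. lra. }
  assert (Htail : RInt (fun _ => l / 2) X N <= RInt g X N).
  { apply RInt_le; [lra | apply ex_RInt_const | apply Hint; lra |].
    intros t Ht. specialize (HM t ltac:(lra)). apply Rabs_lt_between in HM. lra. }
  rewrite RInt_const in Htail. change plus with Rplus.
  unfold scal in Htail; simpl in Htail. change mult with Rmult in Htail. lra.
Qed.

Lemma Rabs_lt_CV_radius (c : nat -> R) :
  (forall x, 0 < x -> ex_pseries c x) -> forall x, Rbar_lt (Rabs x) (CV_radius c).
Proof.
  intros Hc x. pose proof (CV_radius_ge_0 c) as Hr0.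
  destruct (CV_radius c) as [r| |] eqn:E; simpl in *; auto.
  destruct (Rlt_le_dec (Rabs x) r) as [h|h]; auto. exfalso.
  set (y := Rabs x + 1).
  assert (Hy : 0 < y) by (unfold y; pose proof (Rabs_pos x); lra).
  apply (CV_disk_outside c y).
  - rewrite E. simpl. rewrite Rabs_right by lra. unfold y. lra.
  - specialize (Hc y Hy). apply ex_series_lim_0 in Hc.
    eapply is_lim_seq_ext; [|exact Hc]. intros n. simpl.
    rewrite pow_n_pow. unfold scal; simpl. unfold mult; simpl. ring.
Qed.

Lemma qpot_continuous (q0 q1 : R) (c : nat -> R) :
  (forall x, 0 < x -> ex_pseries c x) ->
  forall x, 0 < x -> continuous (qpot q0 q1 c) x.
Proof.
  intros Hc x Hx. apply (@ex_derive_continuous R_AbsRing R_NormedModule).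
  unfold qpot. auto_derive. repeat split; try (intro; nra).
  now apply ex_derive_PSeries, Rabs_lt_CV_radius.
Qed.

Definition solves (q : R -> R) (lam : R) (y y1 : R -> R) : Prop :=
  forall x, 0 < x -> is_derive y x (y1 x) /\ is_derive y1 x ((q x - lam) * y x).

Lemma locally_pos (x : R) : 0 < x -> locally x (fun t => 0 < t).
Proof.
  intros Hx. exists (mkposreal x Hx). intros t Ht.
  apply Rabs_lt_between' in Ht. simpl in Ht. lra.
Qed.

Section Solutions.
Variables (q : R -> R) (lam : R).

Lemma is_sol_solves (y : R -> R) : is_sol q lam y -> solves q lam y (Derive y).
Proof.
  intros Hy x Hx. destruct (Hy x Hx) as (Hd & Hd1 & Heq). split.
  - now apply Derive_correct.
  - replace ((q x - lam) * y x) with (Derive (Derive y) x) by lra.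
    now apply Derive_correct.
Qed.

Lemma solves_Derive (y y1 : R -> R) :
  solves q lam y y1 -> forall x, 0 < x -> Derive y x = y1 x.
Proof. intros Hy x Hx. apply is_derive_unique, (Hy x Hx). Qed.

Lemma solves_continuous (y y1 : R -> R) :
  solves q lam y y1 -> forall x, 0 < x -> continuous y x /\ continuous y1 x.
Proof.
  intros Hy x Hx. destruct (Hy x Hx) as [H H1].
  split; apply (@ex_derive_continuous R_AbsRing R_NormedModule); eexists; eassumption.
Qed.

Lemma solves_ext (y z y1 : R -> R) :
  (forall x, 0 < x -> z x = y x) -> solves q lam y y1 -> solves q lam z y1.
Proof.
  intros Hzy Hy x Hx. destruct (Hy x Hx) as [H H1]. rewrite (Hzy x Hx). split; [|exact H1].
  apply (is_derive_ext_loc y); [|exact H].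
  apply (filter_imp (fun t => 0 < t)); [|now apply locally_pos].
  intros t Ht. symmetry. now apply Hzy.
Qed.

Lemma solves_Derive_self (y y1 : R -> R) : solves q lam y y1 -> solves q lam y (Derive y).
Proof.
  intros Hy x Hx. destruct (Hy x Hx) as [H H1].
  rewrite (is_derive_unique _ _ _ H). split; [exact H|].
  apply (is_derive_ext_loc y1); [|exact H1].
  apply (filter_imp (fun t => 0 < t)); [|now apply locally_pos].
  intros t Ht. symmetry. apply is_derive_unique, (Hy t Ht).
Qed.

Lemma solves_scal (y y1 : R -> R) (k : R) :
  solves q lam y y1 -> solves q lam (fun x => k * y x) (fun x => k * y1 x).
Proof.
  intros Hy x Hx. destruct (Hy x Hx) as [H H1].
  replace ((q x - lam) * (k * y x)) with (k * ((q x - lam) * y x)) by ring.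
  split; now apply is_derive_scal.
Qed.

Lemma solves_plus (y z y1 z1 : R -> R) :
  solves q lam y y1 -> solves q lam z z1 ->
  solves q lam (fun x => y x + z x) (fun x => y1 x + z1 x).
Proof.
  intros Hy Hz x Hx. destruct (Hy x Hx) as [H H1]. destruct (Hz x Hx) as [G G1].
  replace ((q x - lam) * (y x + z x)) with ((q x - lam) * y x + (q x - lam) * z x) by ring.
  split; [apply (is_derive_plus y z) | apply (is_derive_plus y1 z1)]; assumption.
Qed.

Lemma is_derive_solves_mult (y y1 z z1 : R -> R) :
  solves q lam y y1 -> solves q lam z z1 ->
  forall x, 0 < x -> is_derive (fun t => y t * z1 t) x (y1 x * z1 x + (q x - lam) * (y x * z x)).
Proof.
  intros Hy Hz x Hx. destruct (Hy x Hx) as [Hy' _]. destruct (Hz x Hx) as [_ Hz1'].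
  replace (y1 x * z1 x + (q x - lam) * (y x * z x))
    with (plus (mult (y1 x) (z1 x)) (mult (y x) ((q x - lam) * z x)))
    by (unfold plus, mult; simpl; ring).
  apply (is_derive_mult y z1); auto. intros; apply Rmult_comm.
Qed.

End Solutions.

Ltac continuity_step :=
  match goal with
  | |- continuous (fun t => @?f t + @?g t) _ => apply (continuous_plus (V := R_NormedModule) f g)
  | |- continuous (fun t => @?f t - @?g t) _ => apply (continuous_minus (V := R_NormedModule) f g)
  | |- continuous (fun t => @?f t * @?g t) _ => apply (continuous_mult (K := R_AbsRing) f g)
  | |- continuous (fun t => @?f t ^ 2) _ =>
      apply (continuous_mult (K := R_AbsRing) f (fun t => f t * 1))
  | |- continuous (fun t => - @?f t) _ => apply (continuous_opp (V := R_NormedModule) f)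
  | |- continuous (fun _ => ?c) _ => apply continuous_const
  end.

Section Appell_asymptotics.
Variables (q : R -> R) (lam a : R) (P Q S u u1 v v1 : R -> R).
Hypotheses (Hlam : 0 < lam) (Ha : a <> 0)
  (Hq : forall x, 0 < x -> continuous q x) (Hqlim : is_lim q p_infty 0)
  (Hu : solves q lam u u1) (Hv : solves q lam v v1)
  (HPlim : is_lim P p_infty (sqrt lam)) (HQlim : is_lim Q p_infty 0)
  (HSlim : is_lim S p_infty (1 / sqrt lam))
  (HS : forall x, 0 < x -> S x = a * (u x ^ 2 + v x ^ 2))
  (HP : forall x, 0 < x -> P x = a * (u1 x ^ 2 + v1 x ^ 2))
  (HQ : forall x, 0 < x -> Q x = -2 * a * (u x * u1 x + v x * v1 x)).

Lemma solves_pair_continuous (x : R) : 0 < x ->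
  continuous u x /\ continuous u1 x /\ continuous v x /\ continuous v1 x.
Proof.
  intros Hx. destruct (solves_continuous _ _ _ _ Hu x Hx).
  destruct (solves_continuous _ _ _ _ Hv x Hx). tauto.
Qed.

Lemma is_derive_sum_squares (x : R) : 0 < x ->
  is_derive (fun t => a * (u t ^ 2 + v t ^ 2)) x (2 * a * (u x * u1 x + v x * v1 x)).
Proof.
  intros Hx. destruct (Hu x Hx) as [Hu' _]. destruct (Hv x Hx) as [Hv' _].
  auto_derive; [repeat split; eexists; eassumption|].
  replace (Derive (fun t => u t) x) with (u1 x) by (symmetry; now apply is_derive_unique).
  replace (Derive (fun t => v t) x) with (v1 x) by (symmetry; now apply is_derive_unique).
  ring.
Qed.

Lemma Appell_sum_squares_S (x : R) : 0 < x -> u x ^ 2 + v x ^ 2 = Rabs (S x) / Rabs a.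
Proof.
  intros Hx. assert (0 < Rabs a) by (now apply Rabs_pos_lt).
  rewrite (HS x Hx), Rabs_mult, (Rabs_right (_ + _)) by nra. field; lra.
Qed.

Lemma Appell_sum_squares_P (x : R) : 0 < x -> u1 x ^ 2 + v1 x ^ 2 = Rabs (P x) / Rabs a.
Proof.
  intros Hx. assert (0 < Rabs a) by (now apply Rabs_pos_lt).
  rewrite (HP x Hx), Rabs_mult, (Rabs_right (_ + _)) by nra. field; lra.
Qed.

Lemma is_lim_Appell_weight :
  is_lim (fun x => (Rabs (S x) + Rabs (P x)) / Rabs a) p_infty
    ((Rabs (1 / sqrt lam) + Rabs (sqrt lam)) / Rabs a).
Proof.
  apply (is_lim_mult_finite _ (fun _ => / Rabs a)); [|apply is_lim_const].
  apply is_lim_plus'; apply is_lim_Rabs_finite; assumption.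
Qed.

Lemma is_lim_Appell_error :
  is_lim (fun x => (P x - sqrt lam) + lam * (S x - 1 / sqrt lam) - S x * q x) p_infty 0.
Proof.
  replace (Finite 0)
    with (Finite ((sqrt lam - sqrt lam) + lam * (1 / sqrt lam - 1 / sqrt lam) - 1 / sqrt lam * 0))
    by (f_equal; ring).
  apply is_lim_minus'; [apply is_lim_plus'|].
  - apply is_lim_minus'; [assumption | apply is_lim_const].
  - apply (is_lim_mult_finite (fun _ => lam)); [apply is_lim_const|].
    apply is_lim_minus'; [assumption | apply is_lim_const].
  - apply is_lim_mult_finite; assumption.
Qed.

(* The left-hand side is |2 sqrt lam F + (S H)'|; the relation P F + S G + Q H = 0 eliminates G. *)
Lemma Appell_defect_abs_le (F G H : R -> R) (x : R) : 0 < x ->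
  P x * F x + S x * G x + Q x * H x = 0 ->
  Rabs (F x) <= u x ^ 2 + v x ^ 2 ->
  Rabs (H x) <= u x ^ 2 + v x ^ 2 + (u1 x ^ 2 + v1 x ^ 2) ->
  Rabs (2 * sqrt lam * F x + (2 * a * (u x * u1 x + v x * v1 x) * H x
                               + a * (u x ^ 2 + v x ^ 2) * (G x + (q x - lam) * F x)))
  <= 2 * Rabs (Q x) * ((Rabs (S x) + Rabs (P x)) / Rabs a)
     + Rabs ((P x - sqrt lam) + lam * (S x - 1 / sqrt lam) - S x * q x) * (Rabs (S x) / Rabs a).
Proof.
  intros Hx Hrel HFb HHb.
  assert (Hs : 0 < sqrt lam) by (apply sqrt_lt_R0; lra).
  assert (Hss : sqrt lam * sqrt lam = lam) by (apply sqrt_sqrt; lra).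
  assert (Haa : 0 < Rabs a) by (now apply Rabs_pos_lt).
  set (s := sqrt lam) in *.
  set (E := (P x - s) + lam * (S x - 1 / s) - S x * q x).
  replace (2 * s * F x + (2 * a * (u x * u1 x + v x * v1 x) * H x
                          + a * (u x ^ 2 + v x ^ 2) * (G x + (q x - lam) * F x)))
    with (- (2 * Q x * H x) - E * F x).
  2: { unfold E. rewrite <- (HS x Hx), (HQ x Hx) in *. rewrite <- Hss.
       replace (s * s * (S x - 1 / s)) with (s * s * S x - s) by (field; lra).
       lra. }
  rewrite (Appell_sum_squares_S x Hx) in HFb.
  rewrite (Appell_sum_squares_S x Hx), (Appell_sum_squares_P x Hx) in HHb.
  replace (Rabs (S x) / Rabs a + Rabs (P x) / Rabs a)
    with ((Rabs (S x) + Rabs (P x)) / Rabs a) in HHb by (field; lra).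
  unfold Rminus. eapply Rle_trans; [apply Rabs_triang|].
  rewrite !Rabs_Ropp, !Rabs_mult, (Rabs_right 2) by lra.
  apply Rplus_le_compat; [|apply Rmult_le_compat_l; [apply Rabs_pos | exact HFb]].
  rewrite !Rmult_assoc. apply Rmult_le_compat_l; [lra|].
  apply Rmult_le_compat_l; [apply Rabs_pos | exact HHb].
Qed.

Lemma RInt_Appell_sublinear (F G H : R -> R) (x0 : R) : 0 < x0 ->
  (forall x, 0 < x -> continuous F x) ->
  (forall x, 0 < x -> continuous G x) ->
  (forall x, 0 < x -> is_derive H x (G x + (q x - lam) * F x)) ->
  (forall x, 0 < x -> P x * F x + S x * G x + Q x * H x = 0) ->
  (forall x, 0 < x -> Rabs (F x) <= u x ^ 2 + v x ^ 2) ->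
  (forall x, 0 < x -> Rabs (H x) <= u x ^ 2 + v x ^ 2 + (u1 x ^ 2 + v1 x ^ 2)) ->
  sublinear (fun N => RInt F x0 N).
Proof.
  intros Hx0 HFc HGc HH Hrel HFb HHb.
  assert (Hs : 0 < sqrt lam) by (apply sqrt_lt_R0; lra).
  set (Sa := fun t => a * (u t ^ 2 + v t ^ 2)).
  apply (RInt_sublinear F (fun t => Sa t * H t)
           (fun t => 2 * a * (u t * u1 t + v t * v1 t) * H t + Sa t * (G t + (q t - lam) * F t))
           (2 * sqrt lam) x0); try lra; try exact HFc.
  - intros x Hx. apply (is_derive_mult Sa H).
    + now apply is_derive_sum_squares.
    + now apply HH.
    + intros; apply Rmult_comm.
  - intros x Hx.
    destruct (solves_pair_continuous x Hx) as (Cu & Cu1 & Cv & Cv1).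
    assert (CH : continuous H x)
      by (apply (@ex_derive_continuous R_AbsRing R_NormedModule); eexists; now apply HH).
    assert (CF := HFc x Hx). assert (CG := HGc x Hx). assert (Cq := Hq x Hx).
    unfold Sa. repeat (continuity_step || assumption).
  - apply (bounded_of_abs_le_lim _ (fun x => Rabs (S x) * ((Rabs (S x) + Rabs (P x)) / Rabs a))
             (Rabs (1 / sqrt lam) * ((Rabs (1 / sqrt lam) + Rabs (sqrt lam)) / Rabs a))).
    + intros x Hx. unfold Sa. rewrite <- (HS x Hx), Rabs_mult.
      apply Rmult_le_compat_l; [apply Rabs_pos|].
      replace ((Rabs (S x) + Rabs (P x)) / Rabs a) with (Rabs (S x) / Rabs a + Rabs (P x) / Rabs a)
        by (assert (0 < Rabs a) by (now apply Rabs_pos_lt); field; lra).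
      rewrite <- Appell_sum_squares_S, <- Appell_sum_squares_P by exact Hx. now apply HHb.
    + apply is_lim_mult_finite; [now apply is_lim_Rabs_finite | apply is_lim_Appell_weight].
  - apply (is_lim_0_of_abs_le _ _ (fun x Hx => Appell_defect_abs_le F G H x Hx
                                                 (Hrel x Hx) (HFb x Hx) (HHb x Hx))).
    replace (Finite 0)
      with (Finite (2 * Rabs 0 * ((Rabs (1 / sqrt lam) + Rabs (sqrt lam)) / Rabs a)
                    + Rabs 0 * (Rabs (1 / sqrt lam) / Rabs a)))
      by (rewrite Rabs_R0; f_equal; ring).
    apply is_lim_plus'; apply is_lim_mult_finite.
    + apply (is_lim_mult_finite (fun _ => 2)); [apply is_lim_const | now apply is_lim_Rabs_finite].
    + apply is_lim_Appell_weight.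
    + apply is_lim_Rabs_finite, is_lim_Appell_error.
    + apply (is_lim_mult_finite _ (fun _ => / Rabs a));
        [now apply is_lim_Rabs_finite | apply is_lim_const].
Qed.

Lemma RInt_Appell_linear_growth (x0 : R) : 0 < x0 ->
  linear_growth (fun N => RInt (fun x => u x ^ 2 + v x ^ 2) x0 N).
Proof.
  intros Hx0.
  assert (Hs : 0 < sqrt lam) by (apply sqrt_lt_R0; lra).
  assert (Hg0 : forall x, 0 < x -> 0 <= u x ^ 2 + v x ^ 2) by (intros; nra).
  assert (Hlim : is_lim (fun x => u x ^ 2 + v x ^ 2) p_infty (1 / sqrt lam * / a)).
  { apply (is_lim_ext_loc (fun x => S x * / a)).
    - exists 0. intros x Hx. rewrite (HS x Hx). field. exact Ha.
    - apply (is_lim_mult_finite _ (fun _ => / a)); [exact HSlim | apply is_lim_const]. }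
  apply (RInt_linear_growth _ (1 / sqrt lam * / a)); auto.
  - assert (Hnn : Rbar_le 0 (1 / sqrt lam * / a)).
    { apply (is_lim_le_loc (fun _ => 0) (fun x => u x ^ 2 + v x ^ 2) p_infty);
        [exists 0; exact Hg0 | apply is_lim_const | exact Hlim]. }
    simpl in Hnn. destruct Hnn as [Hpos|Hzero]; [exact Hpos|].
    exfalso. symmetry in Hzero. apply Rmult_integral in Hzero.
    destruct Hzero as [Hz|Hz]; [unfold Rdiv in Hz; rewrite Rmult_1_l in Hz|];
      revert Hz; apply Rinv_neq_0_compat; lra.
  - intros x Hx. destruct (solves_pair_continuous x Hx) as (Cu & _ & Cv & _).
    repeat (continuity_step || assumption).
Qed.

(* With psi = u + i v, the triples (F, G, H) used in the next two lemmas are the real and the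
   imaginary parts of (psi^2, psi'^2, psi psi'). *)
Lemma RInt_Re_square_sublinear (x0 : R) : 0 < x0 ->
  sublinear (fun N => RInt (fun x => u x ^ 2 - v x ^ 2) x0 N).
Proof.
  intros Hx0.
  apply (RInt_Appell_sublinear _ (fun x => u1 x ^ 2 - v1 x ^ 2)
           (fun x => u x * u1 x - v x * v1 x)); auto.
  - intros x Hx; destruct (solves_pair_continuous x Hx) as (? & ? & ? & ?).
    repeat (continuity_step || assumption).
  - intros x Hx; destruct (solves_pair_continuous x Hx) as (? & ? & ? & ?).
    repeat (continuity_step || assumption).
  - intros x Hx.
    replace (u1 x ^ 2 - v1 x ^ 2 + (q x - lam) * (u x ^ 2 - v x ^ 2))
      with (minus (u1 x * u1 x + (q x - lam) * (u x * u x))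
                  (v1 x * v1 x + (q x - lam) * (v x * v x)))
      by (unfold minus, plus, opp; simpl; ring).
    apply (is_derive_minus (fun t => u t * u1 t) (fun t => v t * v1 t));
      now apply is_derive_solves_mult.
  - intros x Hx. rewrite (HS x Hx), (HP x Hx), (HQ x Hx). ring.
  - intros x Hx. apply Rabs_le. split; nra.
  - intros x Hx. apply Rabs_le.
    pose proof (pow2_ge_0 (u x - u1 x)); pose proof (pow2_ge_0 (u x + u1 x)).
    pose proof (pow2_ge_0 (v x - v1 x)); pose proof (pow2_ge_0 (v x + v1 x)).
    split; nra.
Qed.

Lemma RInt_Im_square_sublinear (x0 : R) : 0 < x0 ->
  sublinear (fun N => RInt (fun x => 2 * u x * v x) x0 N).
Proof.
  intros Hx0.
  apply (RInt_Appell_sublinear _ (fun x => 2 * u1 x * v1 x)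
           (fun x => u x * v1 x + v x * u1 x)); auto.
  - intros x Hx; destruct (solves_pair_continuous x Hx) as (? & ? & ? & ?).
    repeat (continuity_step || assumption).
  - intros x Hx; destruct (solves_pair_continuous x Hx) as (? & ? & ? & ?).
    repeat (continuity_step || assumption).
  - intros x Hx.
    replace (2 * u1 x * v1 x + (q x - lam) * (2 * u x * v x))
      with (plus (u1 x * v1 x + (q x - lam) * (u x * v x))
                 (v1 x * u1 x + (q x - lam) * (v x * u x)))
      by (unfold plus; simpl; ring).
    apply (is_derive_plus (fun t => u t * v1 t) (fun t => v t * u1 t));
      now apply is_derive_solves_mult.
  - intros x Hx. rewrite (HS x Hx), (HP x Hx), (HQ x Hx). ring.
  - intros x Hx. apply Rabs_le.
    pose proof (pow2_ge_0 (u x - v x)); pose proof (pow2_ge_0 (u x + v x)).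
    split; nra.
  - intros x Hx. apply Rabs_le.
    pose proof (pow2_ge_0 (u x - v1 x)); pose proof (pow2_ge_0 (u x + v1 x)).
    pose proof (pow2_ge_0 (v x - u1 x)); pose proof (pow2_ge_0 (v x + u1 x)).
    split; nra.
Qed.

Lemma RInt_Appell_ratio_lim (x0 : R) : 0 < x0 ->
  is_lim (fun N => RInt (fun x => u x ^ 2 - v x ^ 2) x0 N
                   / RInt (fun x => u x ^ 2 + v x ^ 2) x0 N) p_infty 0 /\
  is_lim (fun N => RInt (fun x => 2 * u x * v x) x0 N
                   / RInt (fun x => u x ^ 2 + v x ^ 2) x0 N) p_infty 0.
Proof.
  intros Hx0.
  split; apply is_lim_div_sublinear_linear_growth; auto using RInt_Appell_linear_growth,
    RInt_Re_square_sublinear, RInt_Im_square_sublinear.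
Qed.

End Appell_asymptotics.

(* Also for d = 0: both sides are then (0, 0), since / 0 = 0. *)
Lemma Cdiv_RtoC (z : C) (d : R) : Cdiv z (RtoC d) = (fst z / d, snd z / d).
Proof.
  destruct z as [x y]. unfold Cdiv, Cmult, Cinv, RtoC; simpl.
  destruct (Req_dec d 0) as [->|Hd].
  - unfold Rdiv. rewrite !Rmult_0_l, Rplus_0_l, Rinv_0. f_equal; ring.
  - f_equal; field; exact Hd.
Qed.

Lemma filterlim_C_of_is_lim (f g : R -> R) :
  is_lim f p_infty 0 -> is_lim g p_infty 0 ->
  filterlim (fun N => (f N, g N) : C) (Rbar_locally p_infty) (locally (RtoC 0)).
Proof.
  intros Hf Hg. apply filterlim_locally. intros eps.
  apply is_lim_spec in Hf. apply is_lim_spec in Hg.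
  generalize (filter_and _ _ (Hf eps) (Hg eps)). apply filter_imp.
  intros N [HfN HgN]. rewrite Rminus_0_r in HfN, HgN.
  split; unfold ball; simpl; unfold AbsRing_ball, abs, minus, plus, opp; simpl;
    now rewrite Ropp_0, Rplus_0_r.
Qed.

Lemma filterlim_Cdiv_RInt_square (psi : R -> C) (u v : R -> R) (x0 : R) : 0 < x0 ->
  (forall x, psi x = (u x, v x)) ->
  (forall x, 0 < x -> continuous u x /\ continuous v x) ->
  is_lim (fun N => RInt (fun x => u x ^ 2 - v x ^ 2) x0 N
                   / RInt (fun x => u x ^ 2 + v x ^ 2) x0 N) p_infty 0 ->
  is_lim (fun N => RInt (fun x => 2 * u x * v x) x0 N
                   / RInt (fun x => u x ^ 2 + v x ^ 2) x0 N) p_infty 0 ->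
  filterlim (fun N => Cdiv (@RInt C_R_CompleteNormedModule (fun x => Cmult (psi x) (psi x)) x0 N)
                           (RtoC (RInt (fun x => Cmod (psi x) ^ 2) x0 N)))
    (Rbar_locally p_infty) (locally (RtoC 0)).
Proof.
  intros Hx0 Hpsi Huv Hre Him.
  eapply filterlim_ext_loc; [|exact (filterlim_C_of_is_lim _ _ Hre Him)].
  exists x0. intros N HN.
  assert (Hint : forall f, (forall x, 0 < x -> continuous f x) -> ex_RInt f x0 N)
    by (intros; apply ex_RInt_continuous_pos; auto; lra).
  assert (Hmod : RInt (fun x => Cmod (psi x) ^ 2) x0 N = RInt (fun x => u x ^ 2 + v x ^ 2) x0 N).
  { apply RInt_ext. intros x _. now rewrite Cmod2_alt, Hpsi. }
  assert (Hsq : @RInt C_R_CompleteNormedModule (fun x => Cmult (psi x) (psi x)) x0 N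
                = (RInt (fun x => u x ^ 2 - v x ^ 2) x0 N, RInt (fun x => 2 * u x * v x) x0 N)).
  { apply is_RInt_unique, is_RInt_fct_extend_pair;
      (eapply is_RInt_ext; [|apply (@RInt_correct R_CompleteNormedModule), Hint]);
      try (intros x _; rewrite Hpsi; simpl; ring);
      intros x Hx; destruct (Huv x Hx); repeat (continuity_step || assumption). }
  now rewrite Hmod, Hsq, Cdiv_RtoC.
Qed.

Lemma is_lim_Appell_invariant (P Q S : R -> R) (lam : R) : 0 < lam ->
  is_lim P p_infty (sqrt lam) -> is_lim Q p_infty 0 -> is_lim S p_infty (1 / sqrt lam) ->
  is_lim (fun x => 4 * P x * S x - Q x ^ 2) p_infty 4.
Proof.
  intros Hlam HP HQ HS.
  assert (Hs : 0 < sqrt lam) by (apply sqrt_lt_R0; lra).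
  replace (Finite 4) with (Finite (4 * sqrt lam * (1 / sqrt lam) - 0 * (0 * 1)))
    by (f_equal; field; lra).
  apply is_lim_minus'; apply is_lim_mult_finite; auto.
  - apply (is_lim_mult_finite (fun _ => 4)); auto using is_lim_const.
  - apply is_lim_mult_finite; auto using is_lim_const.
Qed.

Lemma quadratic_form_discriminant (a b c t t1 p p1 : R) :
  4 * (a * t1 ^ 2 + b * (t1 * p1) + c * p1 ^ 2) * (a * t ^ 2 + b * (t * p) + c * p ^ 2)
  - (a * (-2 * t * t1) + b * (- (t * p1 + t1 * p)) + c * (-2 * p * p1)) ^ 2
  = (4 * a * c - b ^ 2) * (p * t1 - p1 * t) ^ 2.
Proof. ring. Qed.

Lemma quadratic_forms_sum_of_squares (a b c t t1 p p1 : R) :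
  a <> 0 -> 4 * a * c - b ^ 2 = 4 ->
  let u := t + b / (2 * a) * p in let u1 := t1 + b / (2 * a) * p1 in
  let v := -1 / a * p in let v1 := -1 / a * p1 in
  a * t ^ 2 + b * (t * p) + c * p ^ 2 = a * (u ^ 2 + v ^ 2) /\
  a * t1 ^ 2 + b * (t1 * p1) + c * p1 ^ 2 = a * (u1 ^ 2 + v1 ^ 2) /\
  a * (-2 * t * t1) + b * (- (t * p1 + t1 * p)) + c * (-2 * p * p1)
    = -2 * a * (u * u1 + v * v1).
Proof.
  intros Ha Hdisc u u1 v v1.
  replace c with ((b ^ 2 + 4) / (4 * a)) by (field_simplify_eq; lra).
  unfold u, u1, v, v1. repeat split; field; exact Ha.
Qed.

Lemma RInt_Appell_ratio_lim_of_forms (q : R -> R) (lam a b c : R) (P Q S th ph : R -> R)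
  (x0 : R) : 0 < lam -> 0 < x0 ->
  (forall x, 0 < x -> continuous q x) -> is_lim q p_infty 0 ->
  is_lim P p_infty (sqrt lam) -> is_lim Q p_infty 0 -> is_lim S p_infty (1 / sqrt lam) ->
  solves q lam th (Derive th) -> solves q lam ph (Derive ph) ->
  (forall x, 0 < x -> wronskian ph th x = 1) ->
  (forall x, 0 < x ->
     P x = a * (Derive th x) ^ 2 + b * (Derive th x * Derive ph x) + c * (Derive ph x) ^ 2) ->
  (forall x, 0 < x ->
     Q x = a * (-2 * th x * Derive th x) + b * (- (th x * Derive ph x + Derive th x * ph x))
           + c * (-2 * ph x * Derive ph x)) ->
  (forall x, 0 < x -> S x = a * (th x) ^ 2 + b * (th x * ph x) + c * (ph x) ^ 2) ->
  let u := fun x => th x + b / (2 * a) * ph x in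
  let v := fun x => -1 / a * ph x in
  (is_lim (fun N => RInt (fun x => u x ^ 2 - v x ^ 2) x0 N
                   / RInt (fun x => u x ^ 2 + v x ^ 2) x0 N) p_infty 0 /\
   is_lim (fun N => RInt (fun x => 2 * u x * v x) x0 N
                   / RInt (fun x => u x ^ 2 + v x ^ 2) x0 N) p_infty 0).
Proof.
  intros Hlam Hx0 Hq Hqlim HPlim HQlim HSlim Hth Hph Hw HP HQ HS u v.
  assert (Hdisc : 4 * a * c - b ^ 2 = 4).
  { apply (is_lim_eventually_const (fun x => 4 * P x * S x - Q x ^ 2));
      [|now apply (is_lim_Appell_invariant P Q S lam)].
    intros x Hx. rewrite (HP x Hx), (HQ x Hx), (HS x Hx), quadratic_form_discriminant.
    specialize (Hw x Hx). unfold wronskian in Hw. rewrite Hw. ring. }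
  assert (Ha : a <> 0) by (intros ->; nra).
  pose proof (fun x => quadratic_forms_sum_of_squares a b c (th x) (Derive th x) (ph x)
                         (Derive ph x) Ha Hdisc) as Hforms.
  apply (RInt_Appell_ratio_lim q lam a P Q S u (fun x => Derive th x + b / (2 * a) * Derive ph x)
           v (fun x => -1 / a * Derive ph x)); auto.
  - now apply solves_plus, solves_scal.
  - now apply solves_scal.
  - intros x Hx. rewrite (HS x Hx). apply (Hforms x).
  - intros x Hx. rewrite (HP x Hx). apply (Hforms x).
  - intros x Hx. rewrite (HQ x Hx). apply (Hforms x).
Qed.

Theorem mainTheorem10
  (q0 q1 : R) (c : nat -> R)
  (Hc : forall x, 0 < x -> ex_pseries c x)
  (Hq0 : -1/4 <= q0)
  (Hq01 : q0 <> 0 \/ q1 <> 0)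
  (Hqinf : is_lim (qpot q0 q1 c) p_infty 0)
  (Hqint : exists x1, 0 < x1 /\
     (L1_tail (qpot q0 q1 c) x1 \/ L1_tail (Derive (qpot q0 q1 c)) x1))
  (lam : R) (Hlam : 0 < lam)
  (phi : R -> R) (a : nat -> R)
  (Ha_cv : forall x, 0 < x -> ex_pseries a x)
  (Ha0 : a 0%nat = 1)
  (Hphi : forall x, 0 < x ->
     phi x = Rpower x (1/2 + sqrt (q0 + 1/4)) * PSeries a x)
  (Hphi_sol : is_sol (qpot q0 q1 c) lam phi)
  (y2 : R -> R) (kappa : R) (b : nat -> R)
  (Hb_cv : forall x, 0 < x -> ex_pseries b x)
  (Hb_lead : (0 < sqrt (q0 + 1/4) /\ b 0%nat = 1) \/
             (sqrt (q0 + 1/4) = 0 /\ kappa = 1 /\ b 0%nat = 0))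
  (Hy2 : forall x, 0 < x ->
     y2 x = kappa * phi x * ln x + Rpower x (1/2 - sqrt (q0 + 1/4)) * PSeries b x)
  (Hy2_sol : is_sol (qpot q0 q1 c) lam y2)
  (C0 : R) (HC0 : C0 <> 0)
  (HW : forall x, 0 < x -> wronskian phi y2 x = C0)
  (theta : R -> R) (Htheta : forall x, 0 < x -> theta x = y2 x / C0)
  (* U_1 = (P, Q, S); S is the paper's R *)
  (P Q S : R -> R)
  (HP : forall x, 0 < x -> is_derive P x ((lam - qpot q0 q1 c x) * Q x))
  (HQ : forall x, 0 < x ->
     is_derive Q x (-2 * P x + 2 * (lam - qpot q0 q1 c x) * S x))
  (HS : forall x, 0 < x -> is_derive S x (- Q x))
  (HPlim : is_lim P p_infty (sqrt lam))
  (HQlim : is_lim Q p_infty 0)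
  (HSlim : is_lim S p_infty (1 / sqrt lam))
  (astar bstar cstar : R)
  (HUP : forall x, 0 < x ->
     P x = astar * (Derive theta x) ^ 2
           + bstar * (Derive theta x * Derive phi x)
           + cstar * (Derive phi x) ^ 2)
  (HUQ : forall x, 0 < x ->
     Q x = astar * (-2 * theta x * Derive theta x)
           + bstar * (- (theta x * Derive phi x + Derive theta x * phi x))
           + cstar * (-2 * phi x * Derive phi x))
  (HUS : forall x, 0 < x ->
     S x = astar * (theta x) ^ 2 + bstar * (theta x * phi x)
           + cstar * (phi x) ^ 2) :
  let xi : C := (- (bstar / (2 * astar)), 1 / astar) in
  let psi : R -> C := fun x => Cminus (RtoC (theta x)) (Cmult xi (RtoC (phi x))) in
  forall x0 : R, 0 < x0 ->
    filterlim
      (fun N : R =>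
         Cdiv (@RInt C_R_CompleteNormedModule (fun x => Cmult (psi x) (psi x)) x0 N)
              (RtoC (RInt (fun x => (Cmod (psi x)) ^ 2) x0 N)))
      (Rbar_locally p_infty) (locally (RtoC 0)).
Proof.
  intros xi psi x0 Hx0.
  assert (Hphi' := is_sol_solves _ _ _ Hphi_sol).
  assert (Htheta1 : solves (qpot q0 q1 c) lam theta (fun x => / C0 * Derive y2 x)).
  { apply (solves_ext _ _ (fun x => / C0 * y2 x)); [|apply solves_scal, is_sol_solves, Hy2_sol].
    intros x Hx. rewrite (Htheta x Hx). unfold Rdiv. apply Rmult_comm. }
  assert (Htheta' := solves_Derive_self _ _ _ _ Htheta1).
  assert (Hwr : forall x, 0 < x -> wronskian phi theta x = 1).
  { intros x Hx. unfold wronskian. rewrite (solves_Derive _ _ _ _ Htheta1 x Hx), (Htheta x Hx).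
    replace (phi x * (/ C0 * Derive y2 x) - Derive phi x * (y2 x / C0))
      with (wronskian phi y2 x / C0) by (unfold wronskian; field; exact HC0).
    rewrite (HW x Hx). field; exact HC0. }
  destruct (RInt_Appell_ratio_lim_of_forms _ lam astar bstar cstar P Q S theta phi x0 Hlam Hx0
              (qpot_continuous q0 q1 c Hc) Hqinf HPlim HQlim HSlim Htheta' Hphi' Hwr HUP HUQ HUS)
    as [Hre Him].
  apply (filterlim_Cdiv_RInt_square psi (fun x => theta x + bstar / (2 * astar) * phi x)
           (fun x => -1 / astar * phi x) x0 Hx0); [| |exact Hre|exact Him].
  - intros x. unfold psi, xi, Cminus, Cmult, Cplus, Copp, RtoC; simpl.
    f_equal; unfold Rminus, Rdiv; ring.
  - intros x Hx. destruct (solves_continuous _ _ _ _ Htheta' x Hx) as [Cth _].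
    destruct (solves_continuous _ _ _ _ Hphi' x Hx) as [Cph _].
    split; repeat (continuity_step || assumption).
Qed.
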